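(* Let $D\ge 1$, $n_1,\dots,n_D\ge 1$, let $\mathcal{X}\in\mathbb{R}^{n_1\times\cdots\times n_D}$, let $\gamma\ge 0$, and for each $d\in\{1,\dots,D\}$ let $W_d=\{w_{d,ij}\}_{1\le i<j\le n_d}$ be a collection of nonnegative weights. Define, for $\mathcal{U}\in\mathbb{R}^{n_1\times\cdots\times n_D}$, $$F_\gamma(\mathcal{U})=\frac12\|\mathcal{X}-\mathcal{U}\|_F^2+\gamma\sum_{d=1}^D\sum_{1\le i<j\le n_d} w_{d,ij}\,\|\mathcal{U}\times_d\Delta_{d,ij}\|_F .$$ Then $F_\gamma$ has a unique minimizer $\widehat{\mathcal{U}}$, and the map $(\mathcal{X},\gamma,W_1,\dots,W_D)\mapsto\widehat{\mathcal{U}}$ is jointly continuous (on the set where $\gamma\ge0$ and all weights are nonnegative).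
   Context: $\|\cdot\|_F$ is the square root of the sum of squares of all entries of a tensor. For a tensor $\mathcal{A}\in\mathbb{R}^{n_1\times\cdots\times n_D}$ and a matrix $B\in\mathbb{R}^{m\times n_d}$, the $d$-mode product $\mathcal{A}\times_d B$ is the tensor of size $n_1\times\cdots\times n_{d-1}\times m\times n_{d+1}\times\cdots\times n_D$ with entries $(\mathcal{A}\times_d B)_{i_1\ldots i_{d-1} j i_{d+1}\ldots i_D}=\sum_{i_d=1}^{n_d}a_{i_1\ldots i_D}b_{j i_d}$. Here $\Delta_{d,ij}=e_i^\top-e_j^\top\in\mathbb{R}^{1\times n_d}$, where $e_i$ is the $i$th standard basis vector of $\mathbb{R}^{n_d}$; thus $\mathcal{U}\times_d\Delta_{d,ij}$ is the difference of the $i$th and $j$th mode-$d$ subarrays of $\mathcal{U}$ (the subarrays obtained by fixing the $d$th index to $i$, respectively $j$). *)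

From HB Require Import structures.
From mathcomp Require Import all_boot all_order all_algebra.
From mathcomp Require Import reals.
Set Implicit Arguments. Unset Strict Implicit. Unset Printing Implicit Defensive.
Import Order.TTheory GRing.Theory Num.Theory.
Local Open Scope ring_scope.

Definition Idx (D : nat) (n : 'I_D -> nat) : finType :=
  {dffun forall d : 'I_D, 'I_(n d)}.

Definition tensor (R : realType) (D : nat) (n : 'I_D -> nat) :=
  {ffun Idx n -> R}.

(* Weights w_{d,ij}; only the entries with i < j are used. *)
Definition weights (R : realType) (D : nat) (n : 'I_D -> nat) :=
  forall d : 'I_D, 'I_(n d) -> 'I_(n d) -> R.

Definition weights_nonneg (R : realType) (D : nat) (n : 'I_D -> nat)
  (w : weights R n) : Prop :=
  forall (d : 'I_D) (i j : 'I_(n d)), (i < j)%N -> 0 <= w d i j.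

Definition frob (R : realType) (D : nat) (n : 'I_D -> nat) (U : tensor R n) : R :=
  Num.sqrt (\sum_(k : Idx n) U k ^+ 2).

(* || U x_d Delta_{d,ij} ||_F : Frobenius norm of the difference between the
   i-th and j-th mode-d subarrays of U.  An entry of U x_d Delta_{d,ij} is
   indexed by the coordinates other than d; it pairs the index k of the i-th
   subarray (k d = i) with the index k' of the j-th subarray (k' d = j) that
   agrees with k in all coordinates e <> d. *)
Definition mode_diff_norm (R : realType) (D : nat) (n : 'I_D -> nat)
  (U : tensor R n) (d : 'I_D) (i j : 'I_(n d)) : R :=
  Num.sqrt (\sum_(k : Idx n) \sum_(k' : Idx n |
      [&& k d == i, k' d == j & [forall e : 'I_D, (e != d) ==> (k e == k' e)]])
      (U k - U k') ^+ 2).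

Arguments mode_diff_norm {R D n} U d i j.

Definition Fobj (R : realType) (D : nat) (n : 'I_D -> nat)
  (X : tensor R n) (gamma : R) (w : weights R n) (U : tensor R n) : R :=
  2^-1 * frob [ffun k => X k - U k] ^+ 2
  + gamma * \sum_(d : 'I_D) \sum_(i : 'I_(n d)) \sum_(j : 'I_(n d) | (i < j)%N)
              w d i j * mode_diff_norm U d i j.

Definition unique_minimizer (T R : Type) (le : R -> R -> bool) (F : T -> R) (U : T) : Prop :=
  (forall V, le (F U) (F V)) /\ (forall V, (forall V', le (F V) (F V')) -> V = U).

From HB Require Import structures.
From mathcomp Require Import all_boot all_order all_algebra.
From mathcomp Require Import reals ring lra.
From mathcomp Require Import classical_sets boolp topology normedtype.
From mathcomp Require Import realfun function_spaces derive.
Import Order.TTheory GRing.Theory Num.Theory.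
Local Open Scope ring_scope.
Import numFieldNormedType.Exports ArrowAsProduct.

(* The fidelity term of F is 1-strongly convex and the fusion penalty is convex, so F
   grows quadratically away from a minimizer c: F V - F c >= ||V - c||^2 / 4.  This
   gives uniqueness, and adding the growth inequalities for two parameter choices shows
   that the minimizer is Lipschitz in X and in the effective weights gamma * w, because
   every fusion norm is Lipschitz in U.  Existence follows from continuity and
   coercivity: outside the box [-2 ||X||, 2 ||X||]^N the objective is at least F 0. *)

Section EuclideanNorm.
Context {R : rcfType} {I : finType} (P : pred I).
Implicit Types (x y : I -> R) (a b : R).

Definition l2norm x : R := Num.sqrt (\sum_(i | P i) x i ^+ 2).

Lemma sumr_sqr_ge0 x : 0 <= \sum_(i | P i) x i ^+ 2.
Proof. by apply: sumr_ge0 => i _; exact: sqr_ge0. Qed.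

Lemma l2norm_ge0 x : 0 <= l2norm x.
Proof. exact: sqrtr_ge0. Qed.

Lemma sqr_l2norm x : l2norm x ^+ 2 = \sum_(i | P i) x i ^+ 2.
Proof. exact/sqr_sqrtr/sumr_sqr_ge0. Qed.

Lemma eq_l2norm x y : x =1 y -> l2norm x = l2norm y.
Proof. by move=> xy; rewrite /l2norm (eq_bigr (fun i => y i ^+ 2)) // => i _; rewrite xy. Qed.

Lemma l2normZ a x : l2norm (fun i => a * x i) = `|a| * l2norm x.
Proof.
rewrite /l2norm (eq_bigr (fun i => a ^+ 2 * x i ^+ 2)) => [|i _]; last by rewrite exprMn.
by rewrite -mulr_sumr sqrtrM ?sqr_ge0 // sqrtr_sqr.
Qed.

Lemma ler_l2norm x i : P i -> `|x i| <= l2norm x.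
Proof.
move=> Pi; rewrite -sqrtr_sqr ler_wsqrtr // (bigD1 i) //= lerDl.
by apply: sumr_ge0 => j _; exact: sqr_ge0.
Qed.

Lemma l2norm_le_card x a : 0 <= a -> (forall i, P i -> `|x i| <= a) ->
  l2norm x <= Num.sqrt #|P|%:R * a.
Proof.
move=> a0 xa; rewrite -[a in _ * a]ger0_norm // -sqrtr_sqr -sqrtrM ?ler0n //.
rewrite ler_wsqrtr // -sum1_card natr_sum mulr_suml; apply: ler_sum => i Pi.
by rewrite mul1r -[x i ^+ 2]real_normK ?num_real // ler_sqr ?nnegrE ?xa.
Qed.

Lemma cauchy_schwarz x y :
  (\sum_(i | P i) x i * y i) ^+ 2 <= (\sum_(i | P i) x i ^+ 2) * (\sum_(i | P i) y i ^+ 2).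
Proof.
set A := \sum_(i | P i) x i ^+ 2; set B := \sum_(i | P i) y i ^+ 2.
set C := \sum_(i | P i) x i * y i.
have [B0|] := eqVneq B 0.
  have y0 i : P i -> y i = 0.
    move=> Pi; apply/eqP; rewrite -sqrf_eq0; apply/eqP/(psumr_eq0P _ B0) => // j _.
    exact: sqr_ge0.
  rewrite /C big1 => [|i Pi]; last by rewrite y0 // mulr0.
  by rewrite expr0n /= B0 mulr0.
rewrite neq_lt ltNge sumr_sqr_ge0 /= => Bgt0.
have : 0 <= \sum_(i | P i) (B * x i - C * y i) ^+ 2 by exact: sumr_sqr_ge0.
have -> : \sum_(i | P i) (B * x i - C * y i) ^+ 2 = B * (B * A - C ^+ 2).
  rewrite (eq_bigr (fun i =>
    B ^+ 2 * x i ^+ 2 - (2 * B * C) * (x i * y i) + C ^+ 2 * y i ^+ 2)).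
    by rewrite big_split sumrB /= -!mulr_sumr -/A -/B -/C; ring.
  by move=> i _; ring.
by rewrite pmulr_rge0 // subr_ge0 mulrC.
Qed.

Lemma sum_mul_le_l2norm x y : \sum_(i | P i) x i * y i <= l2norm x * l2norm y.
Proof.
rewrite -sqrtrM ?sumr_sqr_ge0 // (le_trans (ler_norm _)) // -sqrtr_sqr.
by rewrite ler_wsqrtr // cauchy_schwarz.
Qed.

Lemma l2normD x y : l2norm (fun i => x i + y i) <= l2norm x + l2norm y.
Proof.
have s0 : 0 <= l2norm x + l2norm y by rewrite addr_ge0 ?l2norm_ge0.
rewrite -(ger0_norm s0) -sqrtr_sqr ler_wsqrtr // sqrrD !sqr_l2norm.
rewrite (eq_bigr (fun i => x i ^+ 2 + y i ^+ 2 + 2 * (x i * y i))); last by move=> i _; ring.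
rewrite !big_split /= -mulr_sumr.
by have := sum_mul_le_l2norm x y; lra.
Qed.

Lemma l2norm_convex a b x y : 0 <= a -> 0 <= b ->
  l2norm (fun i => a * x i + b * y i) <= a * l2norm x + b * l2norm y.
Proof.
move=> a0 b0; apply: le_trans (l2normD (fun i => a * x i) (fun i => b * y i)) _.
by rewrite !l2normZ !ger0_norm.
Qed.

Lemma ler_l2dist x y : `|l2norm x - l2norm y| <= l2norm (fun i => x i - y i).
Proof.
have l2normB x' y' : l2norm x' <= l2norm (fun i => x' i - y' i) + l2norm y'.
  have -> : l2norm x' = l2norm (fun i => (x' i - y' i) + y' i).
    by apply: eq_l2norm => i; rewrite subrK.
  exact: l2normD.
have distC : l2norm (fun i => y i - x i) = l2norm (fun i => x i - y i).
  have -> : l2norm (fun i => y i - x i) = l2norm (fun i => -1 * (x i - y i)).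
    by apply: eq_l2norm => i; rewrite mulN1r opprB.
  by rewrite l2normZ normrN1 mul1r.
rewrite ler_norml; have := l2normB x y; have := l2normB y x; rewrite distC; lra.
Qed.
End EuclideanNorm.

Section CoerciveMinimum.
Context {R : realType} {I : finType}.
Local Open Scope classical_set_scope.

Lemma continuous_coercive_has_min {f : (I -> R) -> R} {M : R} :
  continuous f -> 0 <= M -> (forall (u : I -> R) i, M < `|u i| -> f (fun=> 0) <= f u) ->
  exists c, forall u, f c <= f u.
Proof.
move=> fC M0 f_coercive.
pose box : set (I -> R) := [set u | forall i, `[- M, M] (u i)].
have box_compact : compact box by exact: (tychonoff (fun=> @segment_compact R (- M) M)).
have box0 : box (fun=> 0) by move=> i /=; rewrite in_itv /= oppr_le0 M0.
have [c _ cmin] := compact_EVT_min (ex_intro _ _ box0) box_compact (continuous_subspaceT fC).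
exists c => u; have [boxu|] := pselect (box u); first by apply: cmin; rewrite inE.
move=> /existsNP[i]; rewrite /= in_itv /= -ler_norml => /negP; rewrite -ltNge => Mu.
by apply: le_trans (f_coercive u i Mu); apply: cmin; rewrite inE.
Qed.

End CoerciveMinimum.

Definition minimizer {T : Type} {R : numDomainType} (F : T -> R) (c : T) : Prop :=
  forall t, F c <= F t.

Lemma dist_mul_le (R : realDomainType) (a a0 b b0 r : R) :
  0 <= a0 -> `|a - a0| <= r -> `|b - b0| <= r -> r <= 1 ->
  `|a * b - a0 * b0| <= r * (a0 + `|b0| + 1).
Proof.
move=> a0_ge0 ar br r1.
have -> : a * b - a0 * b0 = (a - a0) * b + a0 * (b - b0) by ring.
apply: le_trans (ler_normD _ _) _; rewrite !normrM (ger0_norm a0_ge0).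
have b_le : `|b| <= `|b0| + 1 by have := ler_normD (b - b0) b0; rewrite subrK; lra.
have := ler_pM (normr_ge0 _) (normr_ge0 _) ar b_le.
have := ler_wpM2l a0_ge0 br; lra.
Qed.

Section ConvexClustering.
Context {R : realType} {D : nat} {n : 'I_D -> nat}.
Local Notation tensor := (tensor R n).
Local Notation weights := (weights R n).
Local Notation N := (#|Idx n|%:R : R).
Implicit Types (U V X c : tensor) (v w : weights) (g : R).

Definition mode_pairs d (i j : 'I_(n d)) : pred (Idx n * Idx n) :=
  [pred p : Idx n * Idx n |
    [&& p.1 d == i, p.2 d == j & [forall e, (e != d) ==> (p.1 e == p.2 e)]]].

Lemma mode_diff_normE U d i j :
  mode_diff_norm U d i j = l2norm (mode_pairs d i j) (fun p => U p.1 - U p.2).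
Proof. by rewrite /mode_diff_norm pair_big_dep. Qed.

Lemma frobE U : frob U = l2norm predT U.
Proof. by []. Qed.

Lemma frobN U : frob (- U) = frob U.
Proof.
rewrite !frobE -[RHS]mul1r -normrN1 -l2normZ.
by apply: eq_l2norm => k; rewrite ffunE mulN1r.
Qed.

Lemma frob_eq0 U : frob U = 0 -> U = 0.
Proof.
move=> U0; apply/ffunP => k; rewrite ffunE; apply: normr0_eq0; apply/eqP.
by rewrite eq_le normr_ge0 andbT -U0 frobE ler_l2norm.
Qed.

Lemma mode_diff_norm_convex U V d i j a b : 0 <= a -> 0 <= b ->
  mode_diff_norm (a *: U + b *: V) d i j <=
  a * mode_diff_norm U d i j + b * mode_diff_norm V d i j.
Proof.
move=> a0 b0; rewrite !mode_diff_normE.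
rewrite (eq_l2norm _ _ (fun p => a * (U p.1 - U p.2) + b * (V p.1 - V p.2))).
  exact: l2norm_convex.
by move=> p; rewrite !ffunE /GRing.scale /=; ring.
Qed.

Lemma ler_mode_diff_norm_dist U V d i j :
  `|mode_diff_norm U d i j - mode_diff_norm V d i j| <= mode_diff_norm (U - V) d i j.
Proof.
rewrite !mode_diff_normE (eq_l2norm _ (fun p => (U - V) p.1 - (U - V) p.2)
  (fun p => (U p.1 - U p.2) - (V p.1 - V p.2))); first exact: ler_l2dist.
by move=> p; rewrite !ffunE; ring.
Qed.

Lemma mode_diff_norm_le_frob U d i j : mode_diff_norm U d i j <= 2 * N * frob U.
Proof.
have r0 : 0 <= 2 * N * frob U by rewrite !mulr_ge0 ?ler0n ?sqrtr_ge0.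
rewrite /mode_diff_norm -(ger0_norm r0) -sqrtr_sqr ler_wsqrtr //.
have pair_le k k' : (U k - U k') ^+ 2 <= (2 * frob U) ^+ 2.
  rewrite -real_normK ?num_real // ler_sqr ?nnegrE ?normr_ge0 ?mulr_ge0 ?sqrtr_ge0 //.
  have := ler_l2norm predT U k isT; have := ler_l2norm predT U k' isT.
  have := ler_normB (U k) (U k'); rewrite -frobE; lra.
apply: (@le_trans _ _ (\sum_(k : Idx n) \sum_(k' : Idx n) (2 * frob U) ^+ 2)).
  apply: ler_sum => k _; rewrite big_mkcond; apply: ler_sum => k' _.
  by case: ifP => _; [exact: pair_le | exact: sqr_ge0].
rewrite !sumr_const -mulrnA -[_ *+ (_ * _)]mulr_natr natrM -[#|xpredT|]/#|Idx n|.
lra.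
Qed.

Definition penalty w U : R :=
  \sum_(d : 'I_D) \sum_(i : 'I_(n d)) \sum_(j : 'I_(n d) | (i < j)%N)
    w d i j * mode_diff_norm U d i j.

Definition weights_norm1 v : R :=
  \sum_(d : 'I_D) \sum_(i : 'I_(n d)) \sum_(j : 'I_(n d) | (i < j)%N) `|v d i j|.

Lemma FobjE X g w U : Fobj X g w U = 2^-1 * frob (X - U) ^+ 2 + g * penalty w U.
Proof. by congr (2^-1 * frob _ ^+ 2 + _); apply/ffunP => k; rewrite !ffunE. Qed.

Lemma penalty0 w : penalty w 0 = 0.
Proof.
rewrite /penalty big1 // => d _; rewrite big1 // => i _; rewrite big1 // => j _.
rewrite mode_diff_normE (eq_l2norm _ _ (fun=> 0)) => [|p]; last by rewrite !ffunE subrr.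
by rewrite /l2norm big1 ?sqrtr0 ?mulr0 // => p _; rewrite expr0n.
Qed.

Lemma penalty_ge0 w U : weights_nonneg w -> 0 <= penalty w U.
Proof.
move=> w_ge0; apply: sumr_ge0 => d _; apply: sumr_ge0 => i _; apply: sumr_ge0 => j ij.
by rewrite mulr_ge0 ?w_ge0 ?sqrtr_ge0.
Qed.

Lemma penalty_scaleB g w g0 w0 U :
  g * penalty w U - g0 * penalty w0 U =
  penalty (fun d i j => g * w d i j - g0 * w0 d i j) U.
Proof.
rewrite /penalty !mulr_sumr -sumrB; apply: eq_bigr => d _.
rewrite !mulr_sumr -sumrB; apply: eq_bigr => i _.
rewrite !mulr_sumr -sumrB; apply: eq_bigr => j _; ring.
Qed.

Lemma penalty_convex w U V a b : weights_nonneg w -> 0 <= a -> 0 <= b ->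
  penalty w (a *: U + b *: V) <= a * penalty w U + b * penalty w V.
Proof.
move=> w_ge0 a0 b0; rewrite /penalty !mulr_sumr -big_split /=; apply: ler_sum => d _.
rewrite !mulr_sumr -big_split /=; apply: ler_sum => i _.
rewrite !mulr_sumr -big_split /=; apply: ler_sum => j ij.
rewrite mulrCA [b * _]mulrCA -mulrDr ler_wpM2l ?w_ge0 //.
exact: mode_diff_norm_convex.
Qed.

Lemma penalty_lipschitz v U V :
  penalty v U - penalty v V <= weights_norm1 v * (2 * N * frob (U - V)).
Proof.
rewrite /penalty /weights_norm1 -sumrB mulr_suml; apply: ler_sum => d _.
rewrite -sumrB mulr_suml; apply: ler_sum => i _.
rewrite -sumrB mulr_suml; apply: ler_sum => j _.
rewrite -mulrBr (le_trans (ler_norm _)) // normrM ler_wpM2l //.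
exact: le_trans (ler_mode_diff_norm_dist U V d i j) (mode_diff_norm_le_frob _ _ _ _).
Qed.

Lemma Fobj_midpoint X g w U V : 0 <= g -> weights_nonneg w ->
  Fobj X g w (2^-1 *: U + 2^-1 *: V) <=
  2^-1 * Fobj X g w U + 2^-1 * Fobj X g w V - 8^-1 * frob (U - V) ^+ 2.
Proof.
move=> g0 w_ge0; rewrite !FobjE.
have parallelogram : frob (X - (2^-1 *: U + 2^-1 *: V)) ^+ 2 =
    2^-1 * frob (X - U) ^+ 2 + 2^-1 * frob (X - V) ^+ 2 - 4^-1 * frob (U - V) ^+ 2.
  rewrite !frobE !sqr_l2norm !mulr_sumr -!big_split -sumrB /=; apply: eq_bigr => k _.
  by rewrite !ffunE /GRing.scale /=; field.
have half_ge0 : 0 <= 2^-1 :> R by rewrite invr_ge0 ler0n.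
have := ler_wpM2l g0 (penalty_convex _ U V _ _ w_ge0 half_ge0 half_ge0).
rewrite parallelogram; lra.
Qed.

Lemma Fobj_growth X g w c V : 0 <= g -> weights_nonneg w ->
  minimizer (Fobj X g w) c -> 4^-1 * frob (V - c) ^+ 2 <= Fobj X g w V - Fobj X g w c.
Proof.
move=> g0 w_ge0 cmin.
have := Fobj_midpoint X g w V c g0 w_ge0; have := cmin (2^-1 *: V + 2^-1 *: c); lra.
Qed.

Lemma minimizer_unique {X g w c c'} : 0 <= g -> weights_nonneg w ->
  minimizer (Fobj X g w) c -> minimizer (Fobj X g w) c' -> c' = c.
Proof.
move=> g0 w_ge0 cmin c'min; apply/eqP; rewrite -subr_eq0; apply/eqP/frob_eq0/eqP.
rewrite -sqrf_eq0 eq_le sqr_ge0 andbT.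
have := Fobj_growth X g w c c' g0 w_ge0 cmin; have := c'min c; lra.
Qed.

Lemma minimizer_lipschitz {X g w c X0 g0 w0 c0} :
  0 <= g -> weights_nonneg w -> minimizer (Fobj X g w) c ->
  0 <= g0 -> weights_nonneg w0 -> minimizer (Fobj X0 g0 w0) c0 ->
  frob (c - c0) <= 2 * (frob (X - X0) +
    2 * N * weights_norm1 (fun d i j => g * w d i j - g0 * w0 d i j)).
Proof.
move=> g_ge0 w_ge0 cmin g0_ge0 w0_ge0 c0min.
set v := fun d i j => _; set e := frob (c - c0).
(* Adding both growth inequalities cancels the values of F, leaving only the
   change of parameters evaluated between c and c0. *)
have grow := Fobj_growth X g w c c0 g_ge0 w_ge0 cmin.
have grow0 := Fobj_growth X0 g0 w0 c0 c g0_ge0 w0_ge0 c0min.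
rewrite -[c0 - c]opprB frobN -/e !FobjE in grow; rewrite -/e !FobjE in grow0.
have quad : 2^-1 * (frob (X - c0) ^+ 2 - frob (X0 - c0) ^+ 2)
    - 2^-1 * (frob (X - c) ^+ 2 - frob (X0 - c) ^+ 2) = \sum_k (X - X0) k * (c - c0) k.
  rewrite !frobE !sqr_l2norm -!sumrB !mulr_sumr -sumrB; apply: eq_bigr => k _.
  by rewrite !ffunE; field.
have cs : \sum_k (X - X0) k * (c - c0) k <= frob (X - X0) * e by exact: sum_mul_le_l2norm.
have pen := penalty_lipschitz v c0 c; rewrite -[c0 - c]opprB frobN -/e in pen.
have lin := penalty_scaleB g w g0 w0.
have := lin c; have := lin c0.
have e_ge0 : 0 <= e by exact: sqrtr_ge0.
have K_ge0 : 0 <= frob (X - X0) + 2 * N * weights_norm1 v.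
  rewrite addr_ge0 ?sqrtr_ge0 // !mulr_ge0 ?ler0n //.
  by do 3 (apply: sumr_ge0 => ? _); exact: normr_ge0.
nra.
Qed.

Lemma minimizer_continuous {X0 g0 w0 c0 eps} :
  0 <= g0 -> weights_nonneg w0 -> minimizer (Fobj X0 g0 w0) c0 -> 0 < eps ->
  exists2 delta : R, 0 < delta & forall X g w c,
    0 <= g -> weights_nonneg w -> minimizer (Fobj X g w) c ->
    (forall k, `|X k - X0 k| < delta) -> `|g - g0| < delta ->
    (forall d (i j : 'I_(n d)), (i < j)%N -> `|w d i j - w0 d i j| < delta) ->
    frob (c - c0) < eps.
Proof.
move=> g0_ge0 w0_ge0 c0min eps_gt0.
pose K := \sum_(d : 'I_D) \sum_(i : 'I_(n d)) \sum_(j : 'I_(n d) | (i < j)%N)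
  (g0 + `|w0 d i j| + 1).
pose L := 2 * (Num.sqrt N + 2 * N * K).
have L_ge0 : 0 <= L.
  rewrite mulr_ge0 // addr_ge0 ?sqrtr_ge0 // !mulr_ge0 ?ler0n //.
  by do 3 (apply: sumr_ge0 => ? _); rewrite !addr_ge0.
have L1_gt0 : 0 < L + 1 by rewrite ltr_wpDl.
pose r := Num.min 1 (eps / (L + 1)).
have r_gt0 : 0 < r by rewrite lt_min ltr01 divr_gt0.
have r_le1 : r <= 1 by rewrite ge_min lexx.
have rL : r * (L + 1) <= eps by rewrite -ler_pdivlMr // ge_min lexx orbT.
exists r => // X g w c g_ge0 w_ge0 cmin dX dg dw.
have frobX : frob (X - X0) <= Num.sqrt N * r.
  by apply: l2norm_le_card => [|k _]; rewrite ?ffunE ltW.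
have normW : weights_norm1 (fun d i j => g * w d i j - g0 * w0 d i j) <= r * K.
  rewrite /weights_norm1 /K !mulr_sumr; apply: ler_sum => d _.
  rewrite mulr_sumr; apply: ler_sum => i _; rewrite mulr_sumr; apply: ler_sum => j ij.
  exact: dist_mul_le g0_ge0 (ltW dg) (ltW (dw _ _ _ ij)) r_le1.
have := minimizer_lipschitz g_ge0 w_ge0 cmin g0_ge0 w0_ge0 c0min.
have := ler_wpM2l (_ : 0 <= 2 * N) normW; rewrite ?mulr_ge0 ?ler0n //.
rewrite /L in rL; lra.
Qed.

Lemma Fobj_continuous X g w :
  continuous (fun u : Idx n -> R => Fobj X g w [ffun k => u k]).
Proof.
pose C (f : (Idx n -> R) -> R) := continuous f.
have cstC a : C (fun=> a) by exact: cst_continuous.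
have ffunC (F : Idx n -> (Idx n -> R) -> R) k :
    C (F k) -> C (fun u => [ffun k' => F k' u] k).
  move=> FC; suff -> : (fun u => [ffun k' => F k' u] k) = F k by [].
  by apply: funext => u; rewrite ffunE.
have coordC k : C (fun u => [ffun k' => u k'] k).
  by apply: (ffunC (fun k' u => u k')); exact: proj_continuous.
have addC f f' : C f -> C f' -> C (fun u => f u + f' u).
  by move=> fC f'C u; exact: continuousD (fC u) (f'C u).
have subC f f' : C f -> C f' -> C (fun u => f u - f' u).
  by move=> fC f'C u; exact: continuousB (fC u) (f'C u).
have mulC f f' : C f -> C f' -> C (fun u => f u * f' u).
  by move=> fC f'C u; exact: continuousM (fC u) (f'C u).
have sqrC f : C f -> C (fun u => f u ^+ 2).
  move=> fC u; apply: (@continuous_comp _ _ _ f (fun x : R => x ^+ 2) _ (fC u)).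
  exact: exprn_continuous.
have sqrtC f : C f -> C (fun u => Num.sqrt (f u)).
  by move=> fC u; apply: continuous_comp (fC u) _; exact: sqrt_continuous.
have sumC (J : finType) (Q : pred J) (F : J -> (Idx n -> R) -> R) :
    (forall j, C (F j)) -> C (fun u => \sum_(j | Q j) F j u).
  by move=> FC; apply: continuous_big => [|j _]; [exact: add_continuous | exact: FC].
rewrite -/(C _) /Fobj /frob /mode_diff_norm.
apply: (addC); apply: (mulC) (cstC _) _.
  apply: (sqrC); apply: (sqrtC); apply: (sumC) => k; apply: (sqrC).
  by apply: (ffunC); apply: (subC) (cstC _) (coordC k).
apply: (sumC) => d; apply: (sumC) => i; apply: (sumC) => j.
apply: (mulC) (cstC _) _.
apply: (sqrtC); apply: (sumC) => k; apply: (sumC) => k'; apply: (sqrC).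
exact: (subC) (coordC k) (coordC k').
Qed.

Lemma Fobj_has_minimizer X g w : 0 <= g -> weights_nonneg w ->
  exists c, minimizer (Fobj X g w) c.
Proof.
move=> g_ge0 w_ge0.
have M_ge0 : 0 <= 2 * frob X by rewrite mulr_ge0 ?sqrtr_ge0.
have coercive (u : Idx n -> R) k : 2 * frob X < `|u k| ->
    Fobj X g w [ffun k => (fun=> 0) k] <= Fobj X g w [ffun k => u k].
  set U := [ffun k => u k] => Uk; rewrite !FobjE.
  have -> : [ffun k => (fun=> 0) k] = 0 :> tensor by apply/ffunP => k'; rewrite !ffunE.
  rewrite subr0 penalty0 mulr0 addr0.
  have Xk : `|X k| <= frob X by exact: ler_l2norm.
  have XUk : `|X k - u k| <= frob (X - U).
    by have := ler_l2norm predT (X - U) k isT; rewrite !ffunE.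
  have := ler_normB (X k) (X k - u k); rewrite subKr => uk.
  have sq : frob X ^+ 2 <= frob (X - U) ^+ 2 by rewrite ler_sqr ?nnegrE ?sqrtr_ge0 //; lra.
  have := mulr_ge0 g_ge0 (penalty_ge0 w U w_ge0); lra.
have [c cmin] := continuous_coercive_has_min (Fobj_continuous X g w) M_ge0 coercive.
by exists [ffun k => c k] => V; rewrite -[V]ffunK; exact: cmin.
Qed.

End ConvexClustering.

Theorem proposition4p1 (R : realType) (D : nat) (n : 'I_D -> nat)
  (hD : (0 < D)%N) (hn : forall d : 'I_D, (0 < n d)%N) :
  exists Uhat : tensor R n -> R -> weights R n -> tensor R n,
    (forall (X : tensor R n) (gamma : R) (w : weights R n),
        0 <= gamma -> weights_nonneg w ->
        unique_minimizer (fun a b : R => a <= b) (Fobj X gamma w) (Uhat X gamma w)) /\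
    (forall (X0 : tensor R n) (gamma0 : R) (w0 : weights R n),
        0 <= gamma0 -> weights_nonneg w0 ->
        forall eps : R, 0 < eps ->
        exists2 delta : R, 0 < delta &
          forall (X : tensor R n) (gamma : R) (w : weights R n),
            0 <= gamma -> weights_nonneg w ->
            (forall k : Idx n, `|X k - X0 k| < delta) ->
            `|gamma - gamma0| < delta ->
            (forall (d : 'I_D) (i j : 'I_(n d)), (i < j)%N ->
                `|w d i j - w0 d i j| < delta) ->
            forall k : Idx n, `|Uhat X gamma w k - Uhat X0 gamma0 w0 k| < eps).
Proof.
(* The argument does not need [hD] and [hn]: degenerate sizes are covered too. *)
have Uhat_spec (X : tensor R n) (g : R) (w : weights R n) :
    {c | 0 <= g -> weights_nonneg w -> minimizer (Fobj X g w) c}.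
  apply: cid; have [[g_ge0 w_ge0]|not_admissible] := pselect (0 <= g /\ weights_nonneg w).
    by have [c cmin] := Fobj_has_minimizer X g w g_ge0 w_ge0; exists c.
  by exists 0 => g_ge0 w_ge0; case: not_admissible.
pose Uhat X g w := sval (Uhat_spec X g w).
have Uhat_min X g w : 0 <= g -> weights_nonneg w -> minimizer (Fobj X g w) (Uhat X g w).
  exact: svalP (Uhat_spec X g w).
exists Uhat; split=> [X g w g_ge0 w_ge0|X0 g0 w0 g0_ge0 w0_ge0 eps eps_gt0].
  split=> [|V Vmin]; first exact: Uhat_min.
  exact: minimizer_unique g_ge0 w_ge0 (Uhat_min _ _ _ g_ge0 w_ge0) Vmin.
have [delta delta_gt0 near_min] :=
  minimizer_continuous g0_ge0 w0_ge0 (Uhat_min X0 g0 w0 g0_ge0 w0_ge0) eps_gt0.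
exists delta => // X g w g_ge0 w_ge0 dX dg dw k.
apply: le_lt_trans (near_min X g w _ g_ge0 w_ge0 (Uhat_min X g w g_ge0 w_ge0) dX dg dw).
by have := ler_l2norm predT (Uhat X g w - Uhat X0 g0 w0) k isT; rewrite !ffunE.
Qed.
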